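(* Let $f_i(z)$ and $g_i(z)$ be the generating functions (by length) of partial ternary paths ending at level $i$ and of reversed partial ternary paths ending at level $i$, respectively. Then $$\sum_{i\ge0} i\,f_i(z)\,g_i(z)=\frac{3t}{(1-3t)^2(1-t)},$$ where $t$ is the formal power series in $x=z^3$ with $t(1-t)^2=x$, $t=x+2x^2+\cdots$. Consequently the coefficient of $z^{3N}$ in this series is the total area of all ternary paths of length $3N$.
   Context: A partial ternary path: lattice path from $(0,0)$ with steps $(1,1)$, $(1,-2)$, all ordinates $\ge0$, ending at level equal to its final ordinate. A reversed partial ternary path: lattice path from $(0,0)$ with steps $(1,2)$, $(1,-1)$, all ordinates $\ge 0$. A ternary path of length $3N$ is a partial ternary path of length $3N$ ending at level $0$; its area is the sum of its ordinates $c_0+\cdots+c_{3N}$, and the total area is the sum over all such paths. *)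

From HB Require Import structures.
From mathcomp Require Import all_boot all_order all_algebra.
Set Implicit Arguments. Unset Strict Implicit. Unset Printing Implicit Defensive.
Import Order.TTheory GRing.Theory Num.Theory.
Local Open Scope ring_scope.

(* A path of length n is a sequence of n steps; [true] = up-step, [false] = down-step. *)

(* partial ternary paths: steps (1,1) and (1,-2) *)
Definition tstep (b : bool) : int := if b then 1 else -2.
(* reversed partial ternary paths: steps (1,2) and (1,-1) *)
Definition rstep (b : bool) : int := if b then 2 else -1.

(* ordinates c_1, ..., c_n of the path starting at (0,0) (c_0 = 0 is omitted) *)
Definition ordinates (st : bool -> int) (s : seq bool) : seq int :=
  scanl (fun h b => h + st b) 0 s.

Definition nonneg_path (st : bool -> int) (s : seq bool) : bool :=
  all (fun h => 0 <= h) (ordinates st s).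

Definition final_level (st : bool -> int) (s : seq bool) : int :=
  last 0 (ordinates st s).

Definition npaths (st : bool -> int) (n : nat) (i : nat) : nat :=
  #|[set s : n.-tuple bool | nonneg_path st s && (final_level st s == i%:Z)]|.

(* f_i(z) = \sum_n npaths tstep n i z^n ,  g_i(z) = \sum_n npaths rstep n i z^n *)
Definition f_coef (i n : nat) : nat := npaths tstep n i.
Definition g_coef (i n : nat) : nat := npaths rstep n i.

(* coefficient of z^m in \sum_{i>=0} i f_i(z) g_i(z).  Only i <= m can
   contribute, since f_i has no terms of degree < i (each step raises the
   level by at most 1). *)
Definition S_coef (m : nat) : nat :=
  \sum_(i < m.+1) i * \sum_(a < m.+1) f_coef i a * g_coef i (m - a).

Definition area (s : seq bool) : int := \sum_(h <- ordinates tstep s) h.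

Definition total_area (N : nat) : int :=
  \sum_(s : (3 * N).-tuple bool | nonneg_path tstep s && (final_level tstep s == 0))
     area s.

Definition series := nat -> rat.

Definition sconst (c : rat) : series := fun n => if n == 0%N then c else 0.
Definition sX : series := fun n => if n == 1%N then 1 else 0.
Definition sadd (a b : series) : series := fun n => a n + b n.
Definition ssub (a b : series) : series := fun n => a n - b n.
Definition sscale (c : rat) (a : series) : series := fun n => c * a n.
Definition smul (a b : series) : series :=
  fun n => \sum_(k < n.+1) a k * b (n - k)%N.

(* multiplicative inverse of a series with nonzero constant term:
   b_0 = 1/a_0,  b_n = -(1/a_0) \sum_{k=1}^n a_k b_{n-k} *)
Fixpoint sinv_list (a : series) (n : nat) : seq rat :=
  match n with
  | 0%N => [:: (a 0%N)^-1]
  | n'.+1 => let l := sinv_list a n' in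
             rcons l (- (a 0%N)^-1 *
                        \sum_(1 <= k < n'.+2) a k * nth 0 l (n'.+1 - k)%N)
  end.
Definition sinv (a : series) : series := fun n => nth 0 (sinv_list a n) n.

Definition rhs_series (t : series) : series :=
  smul (sscale 3 t)
       (sinv (smul (smul (ssub (sconst 1) (sscale 3 t)) (ssub (sconst 1) (sscale 3 t)))
                   (ssub (sconst 1) t))).

From HB Require Import structures.
From mathcomp Require Import all_boot all_order all_algebra.
From mathcomp Require boolp.
From mathcomp Require Import ring zify.
Set Implicit Arguments. Unset Strict Implicit. Unset Printing Implicit Defensive.
Import Order.TTheory GRing.Theory Num.Theory.
Local Open Scope ring_scope.

(* Let T = 1/(1-t), so that T = 1 + x T^3 with x = z^3.  Classifying partial ternary
   paths by their last step gives f_i = z^i T^(i+1); the same recursion, weighted by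
   area, shows that the area generating function of the paths ending at level i is
   z^i T^i ((i+1) A + C(i+1,2) T/(1-3t)) with A = 3t/((1-3t)^2(1-t)), which is A at
   i = 0.  On the other hand the area of a ternary path is the sum of the levels of
   its prefixes, and a prefix ending at level i is completed to a ternary path
   exactly by the reverse of a reversed partial ternary path ending at level i, so
   \sum_i i f_i g_i is also the area generating function of ternary paths. *)

HB.instance Definition _ := boolp.gen_eqMixin series.
HB.instance Definition _ := boolp.gen_choiceMixin series.

Lemma series_ext (a b : series) : (forall n, a n = b n) -> a = b.
Proof. exact: boolp.functional_extensionality_dep. Qed.

Definition sopp (a : series) : series := fun n => - a n.

Lemma saddA : associative sadd.
Proof. by move=> a b c; apply: series_ext => n; rewrite /sadd addrA. Qed.

Lemma saddC : commutative sadd.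
Proof. by move=> a b; apply: series_ext => n; rewrite /sadd addrC. Qed.

Lemma sadd0 : left_id (sconst 0) sadd.
Proof. by move=> a; apply: series_ext => -[|n]; rewrite /sadd /sconst add0r. Qed.

Lemma saddN : left_inverse (sconst 0) sopp sadd.
Proof. by move=> a; apply: series_ext => -[|n]; rewrite /sadd /sconst /sopp addNr. Qed.

HB.instance Definition _ := GRing.isZmodule.Build series saddA saddC sadd0 saddN.

(* The Cauchy product is read off products of truncations, whose ring laws are known. *)
Definition strunc (a : series) (n : nat) : {poly rat} := \poly_(i < n.+1) a i.

Lemma smul_trunc a b n k : (k <= n)%N -> smul a b k = (strunc a n * strunc b n)`_k.
Proof.
move=> le_kn; rewrite coefM /smul; apply: eq_bigr => i _.
by rewrite !coef_poly !ifT //; have := ltn_ord i; lia.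
Qed.

Lemma coefM_trunc (p q r : {poly rat}) n :
  (forall k, (k <= n)%N -> p`_k = q`_k) -> (p * r)`_n = (q * r)`_n.
Proof.
move=> pq; rewrite !coefM; apply: eq_bigr => i _; rewrite pq //.
by have := ltn_ord i; lia.
Qed.

Lemma coef_strunc_smul a b n k :
  (k <= n)%N -> (strunc (smul a b) n)`_k = (strunc a n * strunc b n)`_k.
Proof. by move=> le_kn; rewrite coef_poly ltnS le_kn (smul_trunc _ _ le_kn). Qed.

Lemma smulA : associative smul.
Proof.
move=> a b c; apply: series_ext => n; rewrite !(smul_trunc _ _ (leqnn n)).
rewrite mulrC (coefM_trunc _ (@coef_strunc_smul b c n)).
by rewrite (coefM_trunc _ (@coef_strunc_smul a b n)) mulrC mulrA.
Qed.

Lemma smulC : commutative smul.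
Proof. by move=> a b; apply: series_ext => n; rewrite !(smul_trunc _ _ (leqnn n)) mulrC. Qed.

Lemma smul1 : left_id (sconst 1) smul.
Proof.
move=> a; apply: series_ext => n; rewrite /smul big_ord_recl subn0 /sconst mul1r.
by rewrite big1 ?addr0 // => i _; rewrite mul0r.
Qed.

Lemma smulDl : left_distributive smul sadd.
Proof.
move=> a b c; apply: series_ext => n; rewrite /smul /sadd -big_split.
by apply: eq_bigr => i _; rewrite mulrDl.
Qed.

Lemma sconst1_neq0 : sconst 1 != sconst 0.
Proof. by apply/eqP => /(congr1 (fun a => a 0%N)) /eqP; rewrite oner_eq0. Qed.

HB.instance Definition _ :=
  GRing.Zmodule_isComNzRing.Build series smulA smulC smul1 smulDl sconst1_neq0.

Lemma scoefD (a b : series) n : (a + b) n = a n + b n. Proof. by []. Qed.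
Lemma scoefB (a b : series) n : (a - b) n = a n - b n. Proof. by []. Qed.
Lemma scoefM (a b : series) n : (a * b) n = \sum_(k < n.+1) a k * b (n - k)%N.
Proof. by []. Qed.
Lemma scoef1 n : (1 : series) n = (n == 0)%:R. Proof. by case: n. Qed.

Lemma scoefM0 (a b : series) : (a * b) 0%N = a 0%N * b 0%N.
Proof. by rewrite scoefM big_ord1. Qed.

Lemma scoef_natM (a : series) k n : (k%:R * a) n = k%:R * a n.
Proof.
rewrite !mulr_natl; elim: k => [|k IH]; first by rewrite !mulr0n; case: n.
by rewrite !mulrS scoefD IH.
Qed.

Lemma scoef_XM (a : series) n : (sX * a) n = if n is n'.+1 then a n' else 0.
Proof.
rewrite scoefM; case: n => [|n]; first by rewrite big_ord1 /sX mul0r.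
rewrite big_ord_recl /sX mul0r add0r big_ord_recl mul1r subSS subn0.
by rewrite big1 ?addr0 // => i _; rewrite mul0r.
Qed.

Lemma sscale_mul c (a : series) : sscale c a = sconst c * a.
Proof.
apply: series_ext => n; rewrite scoefM big_ord_recl subn0 /sscale /sconst /=.
by rewrite big1 ?addr0 // => i _; rewrite mul0r.
Qed.

Lemma sconst_nat k : sconst k%:R = k%:R.
Proof.
apply: series_ext => n; rewrite -[k%:R : series]mulr1 scoef_natM scoef1 /sconst.
by case: (n == 0)%N; rewrite ?mulr0 ?mulr1.
Qed.

Lemma size_sinv_list a n : size (sinv_list a n) = n.+1.
Proof. by elim: n => //= n IH; rewrite size_rcons IH. Qed.

Lemma nth_sinv_list a n k : (k <= n)%N -> nth 0 (sinv_list a n) k = sinv a k.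
Proof.
elim: n => [|n IH]; first by rewrite leqn0 => /eqP ->.
rewrite leq_eqVlt => /orP[/eqP -> //|lt_kn].
by rewrite /= nth_rcons size_sinv_list lt_kn IH.
Qed.

Lemma sinvS a n :
  sinv a n.+1 = - (a 0%N)^-1 * \sum_(1 <= k < n.+2) a k * sinv a (n.+1 - k)%N.
Proof.
rewrite /sinv /= nth_rcons size_sinv_list ltnn eqxx; congr (_ * _).
rewrite big_nat_cond [RHS]big_nat_cond; apply: eq_bigr => k /andP[/andP[k1 k2] _].
by rewrite nth_sinv_list //; lia.
Qed.

Lemma mulr_sinv (a : series) : a 0%N != 0 -> a * sinv a = 1.
Proof.
move=> a0; apply: series_ext => -[|n]; first by rewrite scoefM0 /sinv /= divff.
rewrite scoefM scoef1 big_ord_recl subn0 sinvS mulrA mulrN mulfV // mulN1r.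
rewrite big_add1 big_mkord; apply/eqP; rewrite addrC subr_eq0.
by apply/eqP/eq_bigr => i _ /=; rewrite /bump /= add1n.
Qed.

Lemma sinvE (a b : series) : a 0%N != 0 -> a * b = 1 -> sinv a = b.
Proof.
by move=> a0 ab; rewrite -[sinv a]mulr1 -ab mulrA (mulrC (sinv a)) mulr_sinv // mul1r.
Qed.

Section GeneratingSeries.
Variable t : series.
Hypothesis t0 : t 0%N = 0.
Hypothesis t_eq : t * ((1 - t) * (1 - t)) = sX.

Definition tree := sinv (1 - t).
Definition tree_div13t := tree * sinv (1 - 3%:R * t).

(* With [A := rhs_series t], the area generating function of the partial ternary
   paths ending at level [i] is [z^i * area_series i (z^3)]. *)
Definition area_series (i : nat) :=
  tree ^+ i * (i.+1%:R * rhs_series t + 'C(i.+1, 2)%:R * tree_div13t).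

Lemma sub1t_coef0_neq0 : (1 - t) 0%N != 0.
Proof. by rewrite scoefB scoef1 t0 subr0 oner_eq0. Qed.

Lemma sub13t_coef0_neq0 : (1 - 3%:R * t) 0%N != 0.
Proof. by rewrite scoefB scoef1 scoef_natM t0 mulr0 subr0 oner_eq0. Qed.

Lemma mul_sub1t_tree : (1 - t) * tree = 1.
Proof. exact: mulr_sinv sub1t_coef0_neq0. Qed.

Lemma mul_tree_div13t : tree_div13t * (1 - 3%:R * t) = tree.
Proof.
by rewrite /tree_div13t -mulrA [_ * (1 - _)]mulrC mulr_sinv ?sub13t_coef0_neq0 // mulr1.
Qed.

Lemma rhs_seriesE :
  rhs_series t = 3%:R * t * sinv ((1 - 3%:R * t) * (1 - 3%:R * t) * (1 - t)).
Proof. by rewrite /rhs_series !sscale_mul sconst_nat. Qed.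

Lemma rhs_series0 : rhs_series t 0%N = 0.
Proof. by rewrite rhs_seriesE !scoefM0 t0 mulr0 mul0r. Qed.

Lemma mul_rhs_series : rhs_series t * (1 - 3%:R * t) = 3%:R * t * tree_div13t.
Proof.
have -> : rhs_series t = 3%:R * t * (sinv (1 - 3%:R * t) * tree_div13t).
  rewrite rhs_seriesE; congr (_ * _); apply: sinvE.
    by rewrite !scoefM0 !mulf_neq0 ?sub1t_coef0_neq0 ?sub13t_coef0_neq0.
  transitivity (((1 - 3%:R * t) * sinv (1 - 3%:R * t)) ^+ 2 * ((1 - t) * tree)).
    by rewrite /tree_div13t; ring.
  by rewrite mulr_sinv ?sub13t_coef0_neq0 // mul_sub1t_tree expr1n mulr1.
transitivity (3%:R * t * tree_div13t * ((1 - 3%:R * t) * sinv (1 - 3%:R * t))); first ring.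
by rewrite mulr_sinv ?sub13t_coef0_neq0 // mulr1.
Qed.

Lemma x_mul_tree2 : sX * tree ^+ 2 = t.
Proof.
transitivity (t * ((1 - t) * tree) ^+ 2); first by rewrite -t_eq; ring.
by rewrite mul_sub1t_tree expr1n mulr1.
Qed.

Lemma x_mul_tree3 : sX * tree ^+ 3 = tree - 1.
Proof.
rewrite exprS mulrCA x_mul_tree2.
transitivity (tree - (1 - t) * tree); first ring.
by rewrite mul_sub1t_tree.
Qed.

Lemma tree_exprS j : tree ^+ j.+1 = tree ^+ j + sX * tree ^+ j.+3.
Proof. by rewrite -addn3 exprD mulrCA x_mul_tree3 exprS; ring. Qed.

Lemma area_series0 : area_series 0 = rhs_series t.
Proof. by rewrite /area_series expr0 mul1r mul0r addr0 mul1r. Qed.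

Lemma rhs_series_rec : rhs_series t = sX * area_series 2.
Proof.
rewrite /area_series mulrA x_mul_tree2 (_ : 'C(3, 2) = 3)%N //.
transitivity (rhs_series t * (1 - 3%:R * t) + 3%:R * t * rhs_series t); first ring.
by rewrite mul_rhs_series; ring.
Qed.

Lemma three_sub_tree : 3%:R - 2%:R * tree = (1 - 3%:R * t) * tree.
Proof.
transitivity (3%:R * ((1 - t) * tree) - 2%:R * tree); last ring.
by rewrite mul_sub1t_tree mulr1.
Qed.

Lemma tree_div13t_rel : tree_div13t * (3%:R - 2%:R * tree) = tree ^+ 2.
Proof. by rewrite three_sub_tree mulrA mul_tree_div13t. Qed.

Lemma rhs_series_rel :
  rhs_series t * (3%:R - 2%:R * tree) + tree_div13t * (6%:R - 5%:R * tree) = tree ^+ 2.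
Proof.
rewrite -tree_div13t_rel {1}three_sub_tree mulrA mul_rhs_series.
transitivity (tree_div13t * (3%:R - 2%:R * tree)
              + 3%:R * tree_div13t * (1 - (1 - t) * tree)); first ring.
by rewrite mul_sub1t_tree subrr mulr0 addr0.
Qed.

Lemma area_seriesS j :
  area_series j.+1 = area_series j + sX * area_series (j + 3) + j.+1%:R * tree ^+ j.+2.
Proof.
have x_mul_treeX : sX * tree ^+ (j + 3) = tree ^+ j * (tree - 1).
  by rewrite exprD mulrCA x_mul_tree3.
rewrite /area_series [sX * _]mulrA x_mul_treeX addn3 !binS !bin1 !bin0 !natrD !exprS.
apply/eqP; rewrite -subr_eq0; apply/eqP.
transitivity (tree ^+ j *
  ((rhs_series t * (3%:R - 2%:R * tree) + tree_div13t * (6%:R - 5%:R * tree) - tree ^+ 2)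
   + j%:R * (tree_div13t * (3%:R - 2%:R * tree) - tree ^+ 2))).
  ring.
by rewrite rhs_series_rel tree_div13t_rel !subrr mulr0 addr0 mulr0.
Qed.
End GeneratingSeries.

Fixpoint bool_seqs (n : nat) : seq (seq bool) :=
  if n is n'.+1 then [seq rcons s b | s <- bool_seqs n', b <- [:: true; false]]
  else [:: [::]].

Lemma mem_bool_seqs n s : (s \in bool_seqs n) = (size s == n).
Proof.
elim: n s => [|n IH] s; first by case: s.
apply/allpairsP/idP => [[[s' b] /= [s'_in _ ->]]|].
  by rewrite size_rcons eqSS -IH.
case/lastP: s => [//|s b]; rewrite size_rcons eqSS => /eqP sz_s.
by exists (s, b); rewrite /= IH sz_s; case: b.
Qed.

Lemma uniq_bool_seqs n : uniq (bool_seqs n).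
Proof.
elim: n => [//|n IH]; apply: allpairs_uniq => //.
by move=> [s b] [s' b'] _ _ /= /rcons_inj.
Qed.

Lemma big_bool_seqsS (F : seq bool -> int) n :
  \sum_(s <- bool_seqs n.+1) F s =
  \sum_(s <- bool_seqs n) (F (rcons s true) + F (rcons s false)).
Proof.
by rewrite big_allpairs_dep; apply: eq_bigr => s _; rewrite big_cons big_seq1.
Qed.

Lemma big_tuple_bool_seqs (F : seq bool -> int) (P : pred (seq bool)) n :
  \sum_(s : n.-tuple bool | P s) F s = \sum_(s <- bool_seqs n | P s) F s.
Proof.
rewrite -(big_map (@tval n bool) P F); apply: perm_big; apply: uniq_perm.
- by rewrite map_inj_uniq ?index_enum_uniq //; exact: val_inj.
- exact: uniq_bool_seqs.
move=> s; rewrite mem_bool_seqs; apply/mapP/idP => [[x _ ->]|sz_s].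
  by rewrite size_tuple.
by exists (Tuple sz_s); rewrite ?mem_index_enum.
Qed.

Lemma card_tuple_bool_seqs (P : pred (seq bool)) n :
  #|[set s : n.-tuple bool | P s]|%:Z = \sum_(s <- bool_seqs n | P s) 1.
Proof.
rewrite -sum1_card -natz natr_sum -big_tuple_bool_seqs.
by apply: eq_bigl => s; rewrite inE.
Qed.

Section Levels.
Variable st : bool -> int.

Lemma final_level_foldl s : final_level st s = foldl (fun h b => h + st b) 0 s.
Proof. by rewrite /final_level /ordinates; elim: s 0 => //= b s IH h; rewrite IH. Qed.

Lemma ordinates_rcons s b :
  ordinates st (rcons s b) = rcons (ordinates st s) (final_level st s + st b).
Proof. by rewrite /ordinates scanl_rcons foldl_rcons final_level_foldl. Qed.

Lemma final_level_rcons s b : final_level st (rcons s b) = final_level st s + st b.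
Proof. by rewrite /final_level ordinates_rcons last_rcons. Qed.

Lemma nonneg_path_rcons s b :
  nonneg_path st (rcons s b) = (0 <= final_level st s + st b) && nonneg_path st s.
Proof. by rewrite /nonneg_path ordinates_rcons all_rcons. Qed.

Lemma final_level_ge0 s : nonneg_path st s -> 0 <= final_level st s.
Proof.
by case/lastP: s => [//|s b]; rewrite nonneg_path_rcons final_level_rcons => /andP[].
Qed.

Definition ends_at (h : int) (s : seq bool) :=
  nonneg_path st s && (final_level st s == h).

End Levels.

Lemma ends_at_up (i : nat) s : ends_at tstep i.+1 (rcons s true) = ends_at tstep i s.
Proof.
rewrite /ends_at nonneg_path_rcons final_level_rcons /tstep.
case nn_s: (nonneg_path tstep s); last by rewrite andbF.
have /= := final_level_ge0 nn_s; set h := final_level tstep s => h_ge0.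
apply/idP/idP => [/andP[_ /eqP e]|/eqP e]; last (apply/andP; split); apply/eqP; lia.
Qed.

Lemma ends_at0_up s : ends_at tstep 0 (rcons s true) = false.
Proof.
rewrite /ends_at nonneg_path_rcons final_level_rcons /tstep.
case nn_s: (nonneg_path tstep s); last by rewrite andbF.
have /= := final_level_ge0 nn_s; set h := final_level tstep s => h_ge0.
by apply/negP => /andP[_ /eqP e]; lia.
Qed.

Lemma ends_at_down (i : nat) s : ends_at tstep i (rcons s false) = ends_at tstep i.+2 s.
Proof.
rewrite /ends_at nonneg_path_rcons final_level_rcons /tstep.
case nn_s: (nonneg_path tstep s); last by rewrite andbF.
have /= := final_level_ge0 nn_s; set h := final_level tstep s => h_ge0.
apply/idP/idP => [/andP[_ /eqP e]|/eqP e]; last (apply/andP; split); apply/eqP; lia.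
Qed.

Definition tcount (i n : nat) : int := \sum_(s <- bool_seqs n | ends_at tstep i s) 1.
Definition tarea (i n : nat) : int := \sum_(s <- bool_seqs n | ends_at tstep i s) area s.
Definition rcount (i n : nat) : int := \sum_(s <- bool_seqs n | ends_at rstep i s) 1.

Lemma big_ends_atS (F : seq bool -> int) (i : nat) n :
  \sum_(s <- bool_seqs n.+1 | ends_at tstep i s) F s =
  \sum_(s <- bool_seqs n) ((if ends_at tstep i (rcons s true) then F (rcons s true) else 0)
                       + (if ends_at tstep i (rcons s false) then F (rcons s false) else 0)).
Proof. by rewrite big_mkcond big_bool_seqsS. Qed.

Lemma tcount_0 i : tcount i 0 = (i == 0)%:R.
Proof. by rewrite /tcount /= big_cons big_nil /ends_at /final_level; case: i. Qed.

Lemma tcountS i n : tcount i.+1 n.+1 = tcount i n + tcount i.+3 n.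
Proof.
rewrite /tcount big_ends_atS; under eq_bigr => s _ do rewrite ends_at_up ends_at_down.
by rewrite big_split -!big_mkcond.
Qed.

Lemma tcount0S n : tcount 0 n.+1 = tcount 2 n.
Proof.
rewrite /tcount big_ends_atS.
by under eq_bigr => s _ do rewrite ends_at0_up ends_at_down add0r; rewrite -big_mkcond.
Qed.

Lemma area_rcons s b : area (rcons s b) = area s + final_level tstep (rcons s b).
Proof. by rewrite /area ordinates_rcons -cats1 big_cat big_seq1 final_level_rcons. Qed.

Lemma tarea_0 i : tarea i 0 = 0.
Proof. by rewrite /tarea /= big_cons big_nil /area /=; case: ifP; rewrite ?big_nil. Qed.

Lemma tareaS i n :
  tarea i.+1 n.+1 = tarea i n + tarea i.+3 n + i.+1%:R * (tcount i n + tcount i.+3 n).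
Proof.
rewrite /tarea /tcount big_ends_atS.
under eq_bigr => s _ do rewrite ends_at_up ends_at_down !area_rcons !final_level_rcons.
rewrite mulrDr !big_distrr /= !mulr1 addrACA -!big_split /=.
rewrite [\sum_(_ <- _ | ends_at tstep i _) _]big_mkcond.
rewrite [\sum_(_ <- _ | ends_at tstep i.+3 _) _]big_mkcond -big_split /=.
apply: eq_bigr => s _; rewrite /ends_at /tstep.
case: (nonneg_path tstep s) => //=.
case: eqP => e1; case: eqP => e2 //=; rewrite ?e1 ?e2 ?addr0 ?add0r; lia.
Qed.

Lemma tarea0S n : tarea 0 n.+1 = tarea 2 n.
Proof.
rewrite /tarea big_ends_atS.
under eq_bigr => s _ do rewrite ends_at0_up ends_at_down add0r area_rcons final_level_rcons.
rewrite [RHS]big_mkcond; apply: eq_bigr => s _; rewrite /ends_at /tstep.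
case: (nonneg_path tstep s) => //=.
by case: eqP => // ->; lia.
Qed.

(* The coefficient of [z^n] in [z^i * S(z^3)], for a series [S] in [x = z^3]. *)
Definition zcoef (i : nat) (S : series) (n : nat) : rat :=
  if (i <= n)%N && (3 %| n - i)%N then S ((n - i) %/ 3)%N else 0.

Lemma zcoefSS i S n : zcoef i.+1 S n.+1 = zcoef i S n.
Proof. by rewrite /zcoef subSS ltnS. Qed.

Lemma zcoef_add3 i S n : zcoef (i + 3) S n = zcoef i (sX * S) n.
Proof.
rewrite /zcoef scoef_XM; case: (leqP (i + 3) n) => [le_in|lt_ni].
  have -> : (n - i = (n - (i + 3)) + 3)%N by lia.
  rewrite dvdn_addl // (_ : i <= n)%N /=; last by lia.
  by case: ifP => // _; rewrite divnDr //= divnn addn1.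
case: ifP => // /andP[_]; have : (n - i < 3)%N by lia.
by case: (n - i)%N => [|[|[|]]] //; rewrite div0n.
Qed.

Lemma zcoefD i (S1 S2 : series) n : zcoef i (S1 + S2) n = zcoef i S1 n + zcoef i S2 n.
Proof. by rewrite /zcoef; case: ifP; rewrite ?addr0. Qed.

Lemma zcoef_natM i k (S : series) n : zcoef i (k%:R * S) n = k%:R * zcoef i S n.
Proof. by rewrite /zcoef; case: ifP; rewrite ?mulr0 // scoef_natM. Qed.

Lemma zcoef0_1S n : zcoef 0 1 n.+1 = 0.
Proof.
rewrite /zcoef scoef1 subn0; case: ifP => // /andP[_ dvd3n].
by rewrite -[(_ %/ 3)%N == 0]negbK -lt0n divn_gt0 // dvdn_leq.
Qed.

Section PathSeries.
Variable t : series.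
Hypothesis t0 : t 0%N = 0.
Hypothesis t_eq : t * ((1 - t) * (1 - t)) = sX.

Lemma tree0 : tree t 0%N = 1.
Proof. by rewrite /tree /sinv /= scoefB scoef1 t0 subr0 invr1. Qed.

Lemma tcountE n i : (tcount i n)%:~R = zcoef i (tree t ^+ i.+1) n.
Proof.
elim: n i => [|n IH] [|i].
- by rewrite tcount_0 /zcoef /= expr1 tree0.
- by rewrite tcount_0 /zcoef.
- rewrite tcount0S IH (tree_exprS t0 t_eq 0) expr0 zcoefD zcoef0_1S add0r.
  by rewrite -(zcoef_add3 0) zcoefSS.
- rewrite tcountS intrD !IH zcoefSS (tree_exprS t0 t_eq i.+1) zcoefD.
  by rewrite -zcoef_add3 addn3.
Qed.

Lemma tareaE n i : (tarea i n)%:~R = zcoef i (area_series t i) n.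
Proof.
elim: n i => [|n IH] [|i].
- by rewrite tarea_0 /zcoef /= area_series0 rhs_series0.
- by rewrite tarea_0 /zcoef.
- rewrite tarea0S IH area_series0 (rhs_series_rec t0 t_eq).
  by rewrite -(zcoef_add3 0) zcoefSS.
- rewrite tareaS -tcountS !intrD intrM mulrz_nat !IH tcountE !zcoefSS.
  by rewrite (area_seriesS t0 t_eq i) !zcoefD zcoef_natM -zcoef_add3 addn3.
Qed.
End PathSeries.

Definition returns_from (h : int) (q : seq bool) :=
  let hs := scanl (fun h b => h + tstep b) h q in all (fun x => 0 <= x) hs && (last h hs == 0).

Lemma returns_from_rev q h :
  0 <= h -> returns_from h q = ends_at rstep h (rev (map negb q)).
Proof.
elim: q h => [|b q IH] h h_ge0; first by rewrite /returns_from /ends_at /= eq_sym.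
rewrite /= rev_cons /ends_at nonneg_path_rcons final_level_rcons.
rewrite /returns_from /= -andbA -/(returns_from _ q).
have -> : rstep (~~ b) = - tstep b by case: b.
case: (leP 0 (h + tstep b)) => [hb_ge0|hb_lt0] /=.
  rewrite IH // /ends_at.
  case nn: (nonneg_path rstep (rev (map negb q))); last by rewrite andbF.
  have /= := final_level_ge0 nn; set f := final_level _ _ => f_ge0.
  apply/idP/idP => [/eqP e|/andP[_ /eqP e]]; first by apply/andP; split; apply/eqP; lia.
  by apply/eqP; lia.
apply/esym/negP => /andP[/andP[_ nn] /eqP e].
by have := final_level_ge0 nn; lia.
Qed.

Lemma final_level_le_size s : final_level tstep s <= (size s)%:Z.
Proof.
elim/last_ind: s => [//|s b IH]; rewrite final_level_rcons size_rcons.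
have : tstep b <= 1 by case: b.
lia.
Qed.

Lemma area_prefixes s : area s = \sum_(a < (size s).+1) final_level tstep (take a s).
Proof.
elim/last_ind: s => [|s b IH]; first by rewrite big_ord1 /area big_nil.
rewrite area_rcons IH size_rcons [RHS]big_ord_recr /= take_oversize ?size_rcons //.
congr (_ + _); apply: eq_bigr => a _.
by rewrite -cats1 takel_cat // -ltnS.
Qed.

Lemma ends_at0_cat p q :
  ends_at tstep 0 (p ++ q) = nonneg_path tstep p && returns_from (final_level tstep p) q.
Proof.
have ord_cat : ordinates tstep (p ++ q) =
    ordinates tstep p ++ scanl (fun h b => h + tstep b) (final_level tstep p) q.
  by rewrite /ordinates scanl_cat final_level_foldl.
rewrite /ends_at /nonneg_path /final_level ord_cat all_cat last_cat /returns_from -andbA.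
by rewrite -/(final_level tstep p).
Qed.

Lemma big_bool_seqs_cat (G : seq bool -> int) a m : (a <= m)%N ->
  \sum_(s <- bool_seqs m) G s =
  \sum_(p <- bool_seqs a) \sum_(q <- bool_seqs (m - a)) G (p ++ q).
Proof.
move=> le_am; rewrite -big_allpairs_dep; apply: perm_big.
apply: uniq_perm; first exact: uniq_bool_seqs.
  apply: allpairs_uniq; try exact: uniq_bool_seqs.
  move=> [p q] [p' q'] /allpairsP[[x y] /= [x_in _ [-> ->]]].
  move=> /allpairsP[[x' y'] /= [x'_in _ [-> ->]]] /= /eqP.
  rewrite eqseq_cat; last by move: x_in x'_in; rewrite !mem_bool_seqs => /eqP -> /eqP ->.
  by case/andP => /eqP -> /eqP ->.
move=> s; rewrite mem_bool_seqs; apply/idP/allpairsP => [/eqP sz_s|[[p q] /= [p_in q_in ->]]].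
  exists (take a s, drop a s); rewrite /= cat_take_drop !mem_bool_seqs size_take size_drop sz_s.
  by split=> //; case: ltnP => // ?; apply/eqP; lia.
by move: p_in q_in; rewrite !mem_bool_seqs size_cat => /eqP -> /eqP ->; rewrite subnKC.
Qed.

Lemma count_returns_from (i n : nat) :
  \sum_(q <- bool_seqs n | returns_from i q) 1 = rcount i n.
Proof.
rewrite /rcount; under eq_bigl => q do rewrite returns_from_rev //.
rewrite -(big_map (fun q => rev (map negb q)) (ends_at rstep i) (fun _ => 1)).
apply: perm_big; apply: uniq_perm; last 1 first.
- move=> r; rewrite mem_bool_seqs; apply/mapP/idP => [[q q_in ->]|sz_r].
    by rewrite size_rev size_map -mem_bool_seqs.
  exists (rev (map negb r)); first by rewrite mem_bool_seqs size_rev size_map.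
  by rewrite map_rev revK (mapK negbK).
- rewrite map_inj_uniq ?uniq_bool_seqs // => x y /(congr1 rev); rewrite !revK.
  by move/(congr1 (map negb)); rewrite !(mapK negbK).
- exact: uniq_bool_seqs.
Qed.

Lemma big_nonneg_by_level (K : seq bool -> int) a m : (a <= m)%N ->
  \sum_(p <- bool_seqs a | nonneg_path tstep p) K p =
  \sum_(i < m.+1) \sum_(p <- bool_seqs a | ends_at tstep i p) K p.
Proof.
move=> le_am; rewrite (exchange_big_dep predT) //= big_mkcond big_seq [RHS]big_seq.
apply: eq_bigr => p; rewrite mem_bool_seqs => /eqP sz_p.
case nn: (nonneg_path tstep p); last by rewrite big_pred0 // => i; rewrite /ends_at nn.
have := final_level_ge0 nn; have := final_level_le_size p; rewrite sz_p.
case E: (final_level tstep p) => [k|k] // le_ka _.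
have lt_km : (k < m.+1)%N by lia.
rewrite (big_pred1 (Ordinal lt_km)) // => i /=.
by rewrite /ends_at nn E /= eqz_nat eq_sym.
Qed.

Lemma tarea0E m :
  tarea 0 m = \sum_(i < m.+1) i%:R * \sum_(a < m.+1) tcount i a * rcount i (m - a).
Proof.
rewrite /tarea big_seq_cond.
rewrite (eq_bigr (fun s => \sum_(a < m.+1) final_level tstep (take a s))); last first.
  by move=> s /andP[+ _]; rewrite area_prefixes mem_bool_seqs => /eqP ->.
rewrite -big_seq_cond exchange_big /=.
under [RHS]eq_bigr => i _ do rewrite big_distrr.
rewrite [RHS]exchange_big /=; apply: eq_bigr => a _.
have le_am : (a <= m)%N by have := ltn_ord a; lia.
rewrite big_mkcond (big_bool_seqs_cat _ le_am) big_seq.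
rewrite (eq_bigr (fun p => if nonneg_path tstep p then final_level tstep p *
   \sum_(q <- bool_seqs (m - a) | returns_from (final_level tstep p) q) 1 else 0)); last first.
  move=> p; rewrite mem_bool_seqs => /eqP sz_p.
  under eq_bigr => q _ do rewrite ends_at0_cat take_size_cat //.
  case: (nonneg_path tstep p) => /=; last by rewrite big1.
  rewrite big_distrr /= [RHS]big_mkcond; apply: eq_bigr => q _.
  by case: (returns_from _ q); rewrite ?mulr1.
rewrite -big_seq -big_mkcond (big_nonneg_by_level _ le_am); apply: eq_bigr => i _.
rewrite (eq_bigr (fun _ => i%:R * rcount i (m - a))); last first.
  by move=> p /andP[_ /eqP ->]; rewrite count_returns_from natz.
by rewrite /tcount mulrCA big_distrl; apply: eq_bigr => p _ /=; rewrite mul1r.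
Qed.

Lemma f_coefE i n : (f_coef i n)%:Z = tcount i n.
Proof. exact: card_tuple_bool_seqs (ends_at tstep i) n. Qed.

Lemma g_coefE i n : (g_coef i n)%:Z = rcount i n.
Proof. exact: card_tuple_bool_seqs (ends_at rstep i) n. Qed.

Lemma S_coefE m : (S_coef m)%:Z = tarea 0 m.
Proof.
rewrite tarea0E /S_coef -natz natr_sum; apply: eq_bigr => i _.
rewrite natrM natr_sum; congr (_ * _); apply: eq_bigr => a _.
by rewrite natrM !natz f_coefE g_coefE.
Qed.

Lemma total_areaE N : total_area N = tarea 0 (3 * N).
Proof. exact: (big_tuple_bool_seqs area (ends_at tstep 0) (3 * N)). Qed.

Theorem mainTheorem9 (t : series) :
  t 0%N = 0 ->
  (forall n, smul t (smul (ssub (sconst 1) t) (ssub (sconst 1) t)) n = sX n) ->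
  (forall N : nat,
      S_coef (3 * N).+1 = 0%N /\ S_coef (3 * N).+2 = 0%N /\
      (S_coef (3 * N))%:R = rhs_series t N) /\
  (forall N : nat, (S_coef (3 * N))%:Z = total_area N).
Proof.
move=> t0 /series_ext t_eq.
have S_coef_zcoef m : (S_coef m)%:R = zcoef 0 (rhs_series t) m.
  by rewrite -area_series0 -(tareaE t0 t_eq) -S_coefE.
have S_coef_off3 m : ~~ (3 %| m)%N -> S_coef m = 0%N.
  move=> ndvd; apply/eqP; rewrite -(eqr_nat rat) S_coef_zcoef.
  by rewrite /zcoef subn0 (negbTE ndvd) andbF.
split=> N; last by rewrite S_coefE total_areaE.
split; first by apply: S_coef_off3; rewrite -[(3 * N).+1]addn1 dvdn_addr ?dvdn_mulr.
split; first by apply: S_coef_off3; rewrite -[(3 * N).+2]addn2 dvdn_addr ?dvdn_mulr.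
by rewrite S_coef_zcoef /zcoef leq0n subn0 dvdn_mulr //= mulKn.
Qed.
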